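(* Let $x\in(0,1)$ be irrational. Every principal convergent of the OOCF expansion of $x$ is an intermediate convergent of the regular continued fraction of $x$; that is, for every $k\ge1$ there exist $n\ge1$ and $1\le j\le d_n$ with $p_k/q_k=\frac{p^R_{n-2}+jp^R_{n-1}}{q^R_{n-2}+jq^R_{n-1}}$.
   Context: Regular continued fraction (RCF): $x=[0;d_1,d_2,\dots]=\cfrac{1}{d_1+\cfrac{1}{d_2+\cdots}}$, $d_j\in\mathbb N$; convergents $p^R_n/q^R_n$ defined by $p^R_{-1}=1$, $q^R_{-1}=0$, $p^R_0=0$, $q^R_0=1$, $p^R_n=d_np^R_{n-1}+p^R_{n-2}$, $q^R_n=d_nq^R_{n-1}+q^R_{n-2}$. Intermediate convergents: $\frac{p^R_{n-2}+jp^R_{n-1}}{q^R_{n-2}+jq^R_{n-1}}$ for $n\ge1$, $1\le j\le d_n$. OOCF: digits $D=\{(1,1)\}\cup\{(a,\varepsilon):a\ge2,\ \varepsilon=\pm1\}$; $B(k+1,-1)=[\frac{k-1}{k},\frac{2k-1}{2k+1}]$, $B(k,1)=[\frac{2k-1}{2k+1},\frac{k}{k+1}]$ ($k\ge1$); $T(x)=\frac{kx-(k-1)}{k-(k+1)x}$ on $B(k+1,-1)$, $T(x)=\frac{k-(k+1)x}{kx-(k-1)}$ on $B(k,1)$, $T(1)=1$. The OOCF expansion of irrational $x\in(0,1)$ is the unique sequence $(a_n,\varepsilon_n)\in D$ with $T^{n-1}(x)\in B(a_n,\varepsilon_n)$ for all $n\ge1$; its $k$-th principal convergent is $p_k/q_k=1-\cfrac{1}{a_1+\cfrac{\varepsilon_1}{2-\cfrac{1}{\ddots\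 \cfrac{\varepsilon_{k-1}}{2-\cfrac{1}{a_k+\varepsilon_k/2}}}}}$. *)

From Stdlib Require Import Reals Lra Lia ZArith.
Open Scope R_scope.

Definition irrational (x : R) : Prop :=
  ~ exists p q : Z, q <> 0%Z /\ x = IZR p / IZR q.

(* Gauss map G(y) = 1/y - floor(1/y); Int_part is the floor on non-integers. *)
Definition gauss (y : R) : R := / y - IZR (Int_part (/ y)).

Definition rcf_digit (x : R) (n : nat) : Z :=
  Int_part (/ (Nat.iter (n - 1) gauss x)).

(* Shifted convergent numerators/denominators:
   rcfP x m = p^R_{m-1},  rcfQ x m = q^R_{m-1}   (m >= 0). *)
Fixpoint rcfPQ (x : R) (m : nat) : Z * Z :=
  match m with
  | O => (1%Z, 0%Z)
  | S O => (0%Z, 1%Z)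
  | S ((S m') as m1) =>
      let (p1, q1) := rcfPQ x m1 in
      let (p0, q0) := rcfPQ x m' in
      (rcf_digit x m1 * p1 + p0, rcf_digit x m1 * q1 + q0)%Z
  end.
Definition rcfP (x : R) (m : nat) : Z := fst (rcfPQ x m).
Definition rcfQ (x : R) (m : nat) : Z := snd (rcfPQ x m).

Definition oocf_digit (a : nat) (e : Z) : Prop :=
  (a = 1%nat /\ e = 1%Z) \/ ((2 <= a)%nat /\ (e = 1%Z \/ e = (-1)%Z)).

Definition oocf_B (a : nat) (e : Z) (y : R) : Prop :=
  if Z.eqb e 1 then
    let k := INR a in (2*k-1)/(2*k+1) <= y <= k/(k+1)
  else
    let k := INR a - 1 in (k-1)/k <= y <= (2*k-1)/(2*k+1).

Definition oocf_T_branch (a : nat) (e : Z) (y : R) : R :=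
  if Z.eqb e 1 then
    let k := INR a in (k - (k+1)*y) / (k*y - (k-1))
  else
    let k := INR a - 1 in (k*y - (k-1)) / (k - (k+1)*y).

Fixpoint oocf_tail (a : nat -> nat) (e : nat -> Z) (i m : nat) : R :=
  match m with
  | O => INR (a i) + IZR (e i) / 2
  | S m' => INR (a i) + IZR (e i) / (2 - / oocf_tail a e (S i) m')
  end.

Definition oocf_conv (a : nat -> nat) (e : nat -> Z) (k : nat) : R :=
  1 - / oocf_tail a e 1 (k - 1).

(* Write M(t) = (p t + q) / (r t + s) for an integer matrix M = [[p, q], [r, s]].  Each inverse
   branch of the OOCF map is such a Möbius map with M nonnegative and det M = -1, so
   x = M(T^k x) for the product M of the first k inverse branches, and the k-th principal
   convergent is M(1).  It thus suffices that M(1) is an intermediate convergent of x whenever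
   M is nonnegative unimodular and x = M(t) with t > 0.  With d = floor(1/x), the Gauss map
   sends x to G(x) = M'(t) with M' = [[r - d p, s - d q], [p, q]], and M(1) = 1/(d + M'(1)).
   If M' is still nonnegative, induction on the entry sum applies, since 1/(d + .) maps
   intermediate convergents of G(x) to those of x.  Otherwise unimodularity and G(x) > 0 force
   M = [[0, 1], [1, j - 1]] or [[1, 0], [j - 1, 1]] with 1 <= j <= d, and M(1) = 1/j is an
   intermediate convergent of level one. *)

From Stdlib Require Import Reals Lra Lia ZArith.
Open Scope R_scope.

Lemma le_mult_of_div_le (u v w : R) : 0 < w -> u / w <= v -> u <= v * w.
Proof.
  intros Hw H. apply (Rmult_le_compat_r w) in H; [|lra].
  unfold Rdiv in H. rewrite Rmult_assoc, Rinv_l, Rmult_1_r in H; lra.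
Qed.

Lemma mult_le_of_le_div (u v w : R) : 0 < w -> u <= v / w -> u * w <= v.
Proof.
  intros Hw H. apply (Rmult_le_compat_r w) in H; [|lra].
  unfold Rdiv in H. rewrite Rmult_assoc, Rinv_l, Rmult_1_r in H; lra.
Qed.

Lemma irrational_IZR_div (p q : Z) : ~ irrational (IZR p / IZR q).
Proof.
  intros H; apply H. destruct (Z.eq_dec q 0) as [->|Hq].
  - exists 0%Z, 1%Z. split; [lia|]. unfold Rdiv. rewrite Rinv_0, !Rmult_0_l, Rmult_0_r. reflexivity.
  - exists p, q. auto.
Qed.

Lemma irrational_neq_IZR (x : R) (z : Z) : irrational x -> x <> IZR z.
Proof.
  intros H ->. apply (irrational_IZR_div z 1). unfold Rdiv. rewrite Rinv_1, Rmult_1_r. exact H.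
Qed.

Lemma irrational_inv (x : R) : irrational x -> irrational (/ x).
Proof.
  intros H [p [q [_ E]]]. apply (irrational_IZR_div q p).
  rewrite <- Rinv_div, <- E, Rinv_inv. exact H.
Qed.

Lemma irrational_sub_IZR (x : R) (k : Z) : irrational x -> irrational (x - IZR k).
Proof.
  intros H [p [q [Hq E]]]. apply H. exists (p + k * q)%Z, q. split; [exact Hq|].
  apply not_0_IZR in Hq. rewrite plus_IZR, mult_IZR.
  replace x with (x - IZR k + IZR k) by ring. rewrite E. field. exact Hq.
Qed.

(** * The Gauss map and the regular continued fraction *)

Lemma Int_part_inv_ge1 (x : R) : 0 < x < 1 -> (1 <= Int_part (/ x))%Z.
Proof.
  intros Hx. destruct (base_Int_part (/ x)) as [_ H].
  assert (1 < / x) by (rewrite <- Rinv_1; apply Rinv_lt_contravar; lra).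
  assert (Hpos : 0 < IZR (Int_part (/ x))) by lra. apply lt_IZR in Hpos. lia.
Qed.

Lemma irrational_gauss (x : R) : irrational x -> irrational (gauss x).
Proof. intros H. apply irrational_sub_IZR, irrational_inv, H. Qed.

Lemma gauss_bounds (x : R) : irrational x -> 0 < gauss x < 1.
Proof.
  intros H. pose proof (irrational_neq_IZR _ 0 (irrational_gauss x H)) as Hne.
  unfold gauss in *. destruct (base_Int_part (/ x)). simpl in Hne. lra.
Qed.

Lemma rcf_digit_ge1 (x : R) (n : nat) : 0 < x < 1 -> irrational x -> (1 <= rcf_digit x n)%Z.
Proof.
  intros Hx Hi. apply Int_part_inv_ge1. destruct (n - 1)%nat as [|m]; [exact Hx|].
  rewrite Nat.iter_succ. apply gauss_bounds, Nat.iter_invariant; [exact irrational_gauss | exact Hi].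
Qed.

Lemma rcf_digit_gauss (x : R) (n : nat) : (1 <= n)%nat ->
  rcf_digit x (S n) = rcf_digit (gauss x) n.
Proof.
  intros Hn. unfold rcf_digit. replace (S n - 1)%nat with (S (n - 1)) by lia.
  rewrite Nat.iter_succ_r. reflexivity.
Qed.

Lemma rcfPQ_SS (x : R) (m : nat) :
  rcfPQ x (S (S m)) =
  (rcf_digit x (S m) * rcfP x (S m) + rcfP x m, rcf_digit x (S m) * rcfQ x (S m) + rcfQ x m)%Z.
Proof.
  unfold rcfP, rcfQ. change (rcfPQ x (S (S m))) with
    (let (p1, q1) := rcfPQ x (S m) in let (p0, q0) := rcfPQ x m in
     (rcf_digit x (S m) * p1 + p0, rcf_digit x (S m) * q1 + q0)%Z).
  destruct (rcfPQ x (S m)), (rcfPQ x m). reflexivity.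
Qed.

Lemma rcfP_SS (x : R) (m : nat) :
  rcfP x (S (S m)) = (rcf_digit x (S m) * rcfP x (S m) + rcfP x m)%Z.
Proof. unfold rcfP at 1. rewrite rcfPQ_SS. reflexivity. Qed.

Lemma rcfQ_SS (x : R) (m : nat) :
  rcfQ x (S (S m)) = (rcf_digit x (S m) * rcfQ x (S m) + rcfQ x m)%Z.
Proof. unfold rcfQ at 1. rewrite rcfPQ_SS. reflexivity. Qed.

Lemma rcfPQ_gauss (x : R) (m : nat) :
  rcfP x (S m) = rcfQ (gauss x) m /\
  rcfQ x (S m) = (rcf_digit x 1 * rcfQ (gauss x) m + rcfP (gauss x) m)%Z.
Proof.
  set (shifted m := rcfP x (S m) = rcfQ (gauss x) m /\
     rcfQ x (S m) = (rcf_digit x 1 * rcfQ (gauss x) m + rcfP (gauss x) m)%Z).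
  enough (H : shifted m /\ shifted (S m)) by apply H.
  induction m as [|m [IH0 [IH1p IH1q]]]; unfold shifted in *.
  - rewrite rcfP_SS, rcfQ_SS. cbn. lia.
  - split; [split; assumption|].
    rewrite (rcfP_SS x (S m)), (rcfQ_SS x (S m)), (rcfP_SS (gauss x) m), (rcfQ_SS (gauss x) m),
      rcf_digit_gauss, IH1p, IH1q, (proj1 IH0), (proj2 IH0) by lia.
    split; ring.
Qed.

Lemma rcfPQ_nonneg (x : R) (m : nat) : 0 < x < 1 -> irrational x ->
  (0 <= rcfP x m)%Z /\ (0 <= rcfP x (S m))%Z /\ (0 <= rcfQ x m)%Z /\ (1 <= rcfQ x (S m))%Z.
Proof.
  intros Hx Hi. induction m as [|m IH]; [cbn; lia|].
  rewrite rcfP_SS, rcfQ_SS. pose proof (rcf_digit_ge1 x (S m) Hx Hi). nia.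
Qed.

Definition intermediate_convergent (x c : R) : Prop :=
  exists n j : nat,
    (1 <= n)%nat /\ (1 <= j)%nat /\ (Z.of_nat j <= rcf_digit x n)%Z /\
    c = (IZR (rcfP x (n - 1)) + INR j * IZR (rcfP x n)) /
        (IZR (rcfQ x (n - 1)) + INR j * IZR (rcfQ x n)).

Lemma intermediate_convergent_first (x : R) (j : Z) :
  (1 <= j <= rcf_digit x 1)%Z -> intermediate_convergent x (/ IZR j).
Proof.
  intros Hj. exists 1%nat, (Z.to_nat j).
  rewrite INR_IZR_INZ, Z2Nat.id by lia. repeat split; try lia.
  cbn. field. apply not_0_IZR. lia.
Qed.

Lemma intermediate_convergent_gauss (x c : R) : 0 < x < 1 -> irrational x ->
  intermediate_convergent (gauss x) c ->
  intermediate_convergent x (/ (IZR (rcf_digit x 1) + c)).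
Proof.
  intros Hx Hi [[|m] [j [Hn [Hj [Hjd ->]]]]]; [lia|].
  exists (S (S m)), j. rewrite rcf_digit_gauss by lia. repeat split; try lia.
  replace (S (S m) - 1)%nat with (S m) by lia. replace (S m - 1)%nat with m by lia.
  destruct (rcfPQ_gauss x m) as [-> ->], (rcfPQ_gauss x (S m)) as [-> ->].
  pose proof (gauss_bounds x Hi) as Hg. pose proof (irrational_gauss x Hi) as Hgi.
  destruct (rcfPQ_nonneg _ m Hg Hgi) as [P0 [P1 [Q0 Q1]]].
  apply IZR_le in P0, P1, Q0, Q1.
  pose proof (rcf_digit_ge1 x 1 Hx Hi) as Hd. apply IZR_le in Hd.
  assert (1 <= INR j) by (apply (le_INR 1); lia).
  assert (0 < INR j * IZR (rcfQ (gauss x) (S m))) by nra.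
  rewrite !plus_IZR, !mult_IZR. field. split; nra.
Qed.

(** * Möbius maps of nonnegative unimodular integer matrices *)

Record zmat := Zmat { m11 : Z; m12 : Z; m21 : Z; m22 : Z }.

Definition zmat_mul (M N : zmat) : zmat :=
  Zmat (m11 M * m11 N + m12 M * m21 N) (m11 M * m12 N + m12 M * m22 N)
       (m21 M * m11 N + m22 M * m21 N) (m21 M * m12 N + m22 M * m22 N).

Definition mobius (M : zmat) (t : R) : R :=
  (IZR (m11 M) * t + IZR (m12 M)) / (IZR (m21 M) * t + IZR (m22 M)).

Definition nonneg_unimodular (M : zmat) : Prop :=
  (0 <= m11 M)%Z /\ (0 <= m12 M)%Z /\ (0 <= m21 M)%Z /\ (0 <= m22 M)%Z /\
  Z.abs (m11 M * m22 M - m12 M * m21 M) = 1%Z.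

Lemma nonneg_unimodular_mul (M N : zmat) :
  nonneg_unimodular M -> nonneg_unimodular N -> nonneg_unimodular (zmat_mul M N).
Proof.
  unfold nonneg_unimodular, zmat_mul; simpl. intros (? & ? & ? & ? & HM) (? & ? & ? & ? & HN).
  repeat split; try nia.
Qed.

Lemma nonneg_unimodular_rows (M : zmat) : nonneg_unimodular M ->
  (1 <= m11 M + m12 M)%Z /\ (1 <= m21 M + m22 M)%Z.
Proof. unfold nonneg_unimodular. nia. Qed.

Lemma affine_pos (p q : Z) (t : R) :
  (0 <= p)%Z -> (0 <= q)%Z -> (1 <= p + q)%Z -> 0 < t -> 0 < IZR p * t + IZR q.
Proof.
  intros Hp Hq Hpq Ht. apply IZR_le in Hp, Hq. apply IZR_le in Hpq. rewrite plus_IZR in Hpq.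
  destruct (Rle_lt_dec (IZR p) 0); nra.
Qed.

Lemma mobius_num_pos (M : zmat) (t : R) :
  nonneg_unimodular M -> 0 < t -> 0 < IZR (m11 M) * t + IZR (m12 M).
Proof.
  intros HM Ht. pose proof (nonneg_unimodular_rows M HM).
  destruct HM as (? & ? & _). apply affine_pos; tauto.
Qed.

Lemma mobius_den_pos (M : zmat) (t : R) :
  nonneg_unimodular M -> 0 < t -> 0 < IZR (m21 M) * t + IZR (m22 M).
Proof.
  intros HM Ht. pose proof (nonneg_unimodular_rows M HM).
  destruct HM as (_ & _ & ? & ? & _). apply affine_pos; tauto.
Qed.

Lemma mobius_pos (M : zmat) (t : R) : nonneg_unimodular M -> 0 < t -> 0 < mobius M t.
Proof.
  intros HM Ht. apply Rdiv_lt_0_compat; [apply mobius_num_pos | apply mobius_den_pos]; assumption.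
Qed.

Lemma mobius_mul (M N : zmat) (t : R) :
  nonneg_unimodular M -> nonneg_unimodular N -> 0 < t ->
  mobius (zmat_mul M N) t = mobius M (mobius N t).
Proof.
  intros HM HN Ht.
  pose proof (mobius_den_pos N t HN Ht) as DN.
  pose proof (mobius_den_pos M _ HM (mobius_pos N t HN Ht)) as DM.
  unfold mobius in *; simpl. rewrite !plus_IZR, !mult_IZR.
  set (a := IZR (m11 M)) in *; set (b := IZR (m12 M)) in *;
  set (c := IZR (m21 M)) in *; set (d := IZR (m22 M)) in *;
  set (a' := IZR (m11 N)) in *; set (b' := IZR (m12 N)) in *;
  set (c' := IZR (m21 N)) in *; set (d' := IZR (m22 N)) in *.
  assert (DMN : 0 < (c * a' + d * c') * t + (c * b' + d * d')).
  { replace (_ + _) with ((c * ((a' * t + b') / (c' * t + d')) + d) * (c' * t + d'))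
      by (field; lra).
    apply Rmult_lt_0_compat; assumption. }
  field. lra.
Qed.

Lemma mobius_one (M : zmat) :
  mobius M 1 = IZR (m11 M + m12 M) / IZR (m21 M + m22 M).
Proof. unfold mobius. rewrite !Rmult_1_r, !plus_IZR. reflexivity. Qed.

Lemma mobius_IZR_div (M : zmat) (p q : Z) : q <> 0%Z ->
  mobius M (IZR p / IZR q) =
  IZR (m11 M * p + m12 M * q) / IZR (m21 M * p + m22 M * q).
Proof.
  intros Hq. apply not_0_IZR in Hq. unfold mobius. rewrite !plus_IZR, !mult_IZR.
  replace (IZR (m21 M) * (IZR p / IZR q) + IZR (m22 M))
    with ((IZR (m21 M) * IZR p + IZR (m22 M) * IZR q) / IZR q) by (field; exact Hq).
  destruct (Req_dec (IZR (m21 M) * IZR p + IZR (m22 M) * IZR q) 0) as [E|E].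
  - rewrite E, Rdiv_0_l, !Rdiv_0_r. reflexivity.
  - field. split; assumption.
Qed.

Lemma irrational_mobius (M : zmat) (t : R) : irrational (mobius M t) -> irrational t.
Proof.
  intros H [p [q [Hq ->]]]. rewrite mobius_IZR_div in H by exact Hq.
  exact (irrational_IZR_div _ _ H).
Qed.

(** * One Gauss step on a Möbius representation *)

Definition gauss_mat (d : Z) (M : zmat) : zmat :=
  Zmat (m21 M - d * m11 M) (m22 M - d * m12 M) (m11 M) (m12 M).

Lemma inv_mobius_sub (M : zmat) (d : Z) (t : R) :
  nonneg_unimodular M -> 0 < t -> / mobius M t - IZR d = mobius (gauss_mat d M) t.
Proof.
  intros HM Ht. pose proof (mobius_num_pos M t HM Ht). pose proof (mobius_den_pos M t HM Ht).
  unfold mobius, gauss_mat; simpl. rewrite !minus_IZR, !mult_IZR. field. lra.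
Qed.

Lemma mobius_one_gauss_mat (M : zmat) (d : Z) : nonneg_unimodular M ->
  mobius M 1 = / (IZR d + mobius (gauss_mat d M) 1).
Proof.
  intros HM. rewrite <- inv_mobius_sub by (assumption || lra).
  replace (IZR d + (/ mobius M 1 - IZR d)) with (/ mobius M 1) by ring.
  rewrite Rinv_inv. reflexivity.
Qed.

Lemma gauss_mat_nonneg_unimodular (M : zmat) (d : Z) : nonneg_unimodular M ->
  (0 <= m11 (gauss_mat d M))%Z -> (0 <= m12 (gauss_mat d M))%Z ->
  nonneg_unimodular (gauss_mat d M).
Proof.
  unfold nonneg_unimodular, gauss_mat; simpl. intros (? & ? & ? & ? & HM) ? ?.
  repeat split; try assumption. rewrite <- HM, <- Z.abs_opp. f_equal. ring.
Qed.

Lemma mobius_pos_entry (M : zmat) (t : R) : 0 < t ->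
  0 < IZR (m21 M) * t + IZR (m22 M) -> 0 < mobius M t -> (0 < m11 M \/ 0 < m12 M)%Z.
Proof.
  intros Ht Hden Hpos. unfold mobius in Hpos.
  assert (Hnum : 0 < IZR (m11 M) * t + IZR (m12 M)).
  { replace (_ + _) with ((IZR (m11 M) * t + IZR (m12 M)) / (IZR (m21 M) * t + IZR (m22 M))
      * (IZR (m21 M) * t + IZR (m22 M))) by (field; lra).
    apply Rmult_lt_0_compat; assumption. }
  destruct (Z_lt_le_dec 0 (m11 M)) as [|H1]; [now left|].
  destruct (Z_lt_le_dec 0 (m12 M)) as [|H2]; [now right|].
  apply IZR_le in H1, H2. nra.
Qed.

Lemma gauss_mat_boundary (M : zmat) (d : Z) : nonneg_unimodular M -> (1 <= d)%Z ->
  (m11 (gauss_mat d M) < 0 \/ m12 (gauss_mat d M) < 0)%Z ->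
  (0 < m11 (gauss_mat d M) \/ 0 < m12 (gauss_mat d M))%Z ->
  (m11 M + m12 M = 1 /\ 1 <= m21 M + m22 M <= d)%Z.
Proof.
  unfold nonneg_unimodular, gauss_mat; simpl. intros (? & ? & ? & ? & Hdet) Hd [Hu|Hv] [Hu'|Hv']; nia.
Qed.

Definition zmat_weight (M : zmat) : nat := Z.to_nat (m11 M + m12 M + m21 M + m22 M).

Theorem intermediate_convergent_mobius_one (x t : R) (M : zmat) :
  0 < x < 1 -> irrational x -> nonneg_unimodular M -> 0 < t -> x = mobius M t ->
  intermediate_convergent x (mobius M 1).
Proof.
  revert x. induction M as [M IH] using (well_founded_ind (Wf_nat.well_founded_ltof _ zmat_weight)).
  intros x Hx Hi HM Ht Ex.
  set (d := rcf_digit x 1). pose proof (rcf_digit_ge1 x 1 Hx Hi) as Hd.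
  assert (Hgx : gauss x = mobius (gauss_mat d M) t)
    by (change (gauss x) with (/ x - IZR d); rewrite Ex; apply inv_mobius_sub; assumption).
  assert (Hcases : ((0 <= m11 (gauss_mat d M) /\ 0 <= m12 (gauss_mat d M)) \/
                    (m11 (gauss_mat d M) < 0 \/ m12 (gauss_mat d M) < 0))%Z) by lia.
  destruct Hcases as [[Hu Hv]|Hneg].
  - pose proof (gauss_mat_nonneg_unimodular M d HM Hu Hv) as HM'.
    rewrite (mobius_one_gauss_mat M d HM). apply intermediate_convergent_gauss; [assumption..|].
    apply IH; try assumption.
    + pose proof (nonneg_unimodular_rows M HM). destruct HM as (? & ? & ? & ? & _).
      unfold Wf_nat.ltof, zmat_weight. simpl. nia.
    + apply gauss_bounds, Hi.
    + apply irrational_gauss, Hi.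
  - assert (Hpos : (0 < m11 (gauss_mat d M) \/ 0 < m12 (gauss_mat d M))%Z).
    { apply (mobius_pos_entry _ t Ht); [exact (mobius_num_pos M t HM Ht)|].
      rewrite <- Hgx. apply gauss_bounds, Hi. }
    destruct (gauss_mat_boundary M d HM Hd Hneg Hpos) as [Hnum Hden].
    rewrite mobius_one, Hnum, Rdiv_1_l. apply intermediate_convergent_first, Hden.
Qed.

(** * The inverse branches of the OOCF map *)

Definition oocf_branch_mat (a : nat) (e : Z) : zmat :=
  let k := Z.of_nat a in
  if Z.eqb e 1 then Zmat (k - 1) k k (k + 1) else Zmat (k - 1) (k - 2) k (k - 1).

Lemma oocf_branch_mat_nonneg_unimodular (a : nat) (e : Z) :
  oocf_digit a e -> nonneg_unimodular (oocf_branch_mat a e).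
Proof.
  unfold oocf_digit, nonneg_unimodular, oocf_branch_mat.
  intros [[-> ->]|[Ha [-> | ->]]]; simpl; lia.
Qed.

Lemma oocf_B_nonneg (a : nat) (e : Z) (y : R) : oocf_digit a e -> oocf_B a e y -> 0 <= y.
Proof.
  unfold oocf_digit, oocf_B.
  intros [[-> ->]|[Ha [-> | ->]]]; simpl Z.eqb; cbv iota; intros [Hlow _];
    [simpl INR in Hlow; lra|..];
    assert (2 <= INR a) by (apply (le_INR 2); lia);
    (eapply Rle_trans; [|exact Hlow]); unfold Rdiv;
    (apply Rmult_le_pos; [lra | left; apply Rinv_0_lt_compat; lra]).
Qed.

Lemma mobius_oocf_branch_mat (a : nat) (e : Z) (y : R) : oocf_digit a e -> oocf_B a e y ->
  mobius (oocf_branch_mat a e) (oocf_T_branch a e y) = y.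
Proof.
  unfold oocf_digit, oocf_B, oocf_T_branch, mobius, oocf_branch_mat.
  intros [[-> ->]|[Ha [-> | ->]]]; simpl Z.eqb; cbv iota; simpl m11; simpl m12; simpl m21; simpl m22;
    rewrite ?minus_IZR, ?plus_IZR, <- ?INR_IZR_INZ; intros [Hlow Hup].
  - simpl INR in *. field. lra.
  - set (k := INR a) in *. assert (Hk : 2 <= k) by (apply (le_INR 2); lia).
    apply le_mult_of_div_le in Hlow; [|lra].
    assert (k * y - (k - 1) > 0) by nra.
    field. split; [lra|]. intros E; ring_simplify in E; lra.
  - assert (2 <= INR a) by (apply (le_INR 2); lia).
    set (k := INR a - 1) in *. assert (Hk : 1 <= k) by (unfold k; lra).
    apply mult_le_of_le_div in Hup; [|lra].
    assert (k - (k + 1) * y > 0) by nra.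
    replace (INR a) with (k + 1) by (unfold k; ring). simpl (IZR 1); simpl (IZR 2).
    field. split; [lra|]. intros E; ring_simplify in E; lra.
Qed.

Lemma mobius_oocf_branch_mat_tail (a : nat) (e : Z) (c : R) : oocf_digit a e -> 0 < c ->
  mobius (oocf_branch_mat a e) c = 1 - / (INR a + IZR e / (1 + c)).
Proof.
  unfold oocf_digit, mobius, oocf_branch_mat.
  intros [[-> ->]|[Ha [-> | ->]]] Hc; simpl Z.eqb; cbv iota; simpl m11; simpl m12; simpl m21; simpl m22;
    rewrite ?minus_IZR, ?plus_IZR, <- ?INR_IZR_INZ; simpl (IZR 1); simpl (IZR 2); simpl (IZR (-1)).
  - simpl INR. field. lra.
  - assert (2 <= INR a) by (apply (le_INR 2); lia).
    field. split; nra.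
  - assert (2 <= INR a) by (apply (le_INR 2); lia).
    field. repeat split; nra.
Qed.

Fixpoint oocf_mat (a : nat -> nat) (e : nat -> Z) (i m : nat) : zmat :=
  match m with
  | O => oocf_branch_mat (a i) (e i)
  | S m' => zmat_mul (oocf_branch_mat (a i) (e i)) (oocf_mat a e (S i) m')
  end.

Section OOCFExpansion.

Variables (a : nat -> nat) (e : nat -> Z).
Hypothesis oocf_digit_a_e : forall n : nat, (1 <= n)%nat -> oocf_digit (a n) (e n).

Lemma oocf_mat_nonneg_unimodular (i m : nat) : (1 <= i)%nat -> nonneg_unimodular (oocf_mat a e i m).
Proof.
  revert i. induction m as [|m IH]; intros i Hi; simpl;
    [|apply nonneg_unimodular_mul; [|apply IH; lia]];
    apply oocf_branch_mat_nonneg_unimodular, oocf_digit_a_e, Hi.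
Qed.

Lemma oocf_tail_mobius (i m : nat) : (1 <= i)%nat ->
  1 - / oocf_tail a e i m = mobius (oocf_mat a e i m) 1.
Proof.
  revert i. induction m as [|m IH]; intros i Hi; simpl.
  - rewrite mobius_oocf_branch_mat_tail by (auto || lra).
    replace (1 + 1) with 2 by ring. reflexivity.
  - assert (Hc : 0 < mobius (oocf_mat a e (S i) m) 1)
      by (apply mobius_pos; [apply oocf_mat_nonneg_unimodular; lia | lra]).
    rewrite mobius_mul, mobius_oocf_branch_mat_tail, <- IH by
      first [lia | lra | assumption | apply oocf_digit_a_e; lia
            | apply oocf_branch_mat_nonneg_unimodular, oocf_digit_a_e; lia
            | apply oocf_mat_nonneg_unimodular; lia].
    replace (1 + (1 - / oocf_tail a e (S i) m)) with (2 - / oocf_tail a e (S i) m) by ring.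
    reflexivity.
Qed.

Section Orbit.

Variable y : nat -> R.
Hypothesis oocf_orbit_step : forall n : nat, (1 <= n)%nat ->
  oocf_B (a n) (e n) (y (n - 1)%nat) /\ y n = oocf_T_branch (a n) (e n) (y (n - 1)%nat).
Hypothesis irrational_y0 : irrational (y O).

Lemma oocf_orbit_pred (n : nat) : (1 <= n)%nat ->
  y (n - 1)%nat = mobius (oocf_branch_mat (a n) (e n)) (y n).
Proof.
  intros Hn. destruct (oocf_orbit_step n Hn) as [HB ->].
  symmetry. apply mobius_oocf_branch_mat; auto.
Qed.

Lemma oocf_orbit_irrational (n : nat) : irrational (y n).
Proof.
  induction n as [|n IH]; [exact irrational_y0|].
  apply (irrational_mobius (oocf_branch_mat (a (S n)) (e (S n)))).
  rewrite <- oocf_orbit_pred by lia. replace (S n - 1)%nat with n by lia. exact IH.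
Qed.

Lemma oocf_orbit_pos (n : nat) : 0 < y n.
Proof.
  destruct (oocf_orbit_step (S n)) as [HB _]; [lia|]. replace (S n - 1)%nat with n in HB by lia.
  pose proof (oocf_B_nonneg _ _ _ (oocf_digit_a_e (S n) ltac:(lia)) HB).
  pose proof (irrational_neq_IZR _ 0 (oocf_orbit_irrational n)). simpl in *. lra.
Qed.

Lemma oocf_orbit_mobius (i m : nat) : (1 <= i)%nat ->
  y (i - 1)%nat = mobius (oocf_mat a e i m) (y (i + m)%nat).
Proof.
  revert i. induction m as [|m IH]; intros i Hi; simpl.
  - rewrite Nat.add_0_r. apply oocf_orbit_pred, Hi.
  - rewrite mobius_mul, <- Nat.add_succ_comm, <- (IH (S i)), oocf_orbit_pred by
      first [lia | apply oocf_branch_mat_nonneg_unimodular, oocf_digit_a_e; lia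
            | apply oocf_mat_nonneg_unimodular; lia | apply oocf_orbit_pos].
    replace (S i - 1)%nat with i by lia. reflexivity.
Qed.

End Orbit.

End OOCFExpansion.

Theorem theorem5p2 (x : R) (a : nat -> nat) (e : nat -> Z) (y : nat -> R) :
  0 < x < 1 -> irrational x ->
  y O = x ->
  (forall n : nat, (1 <= n)%nat ->
     oocf_digit (a n) (e n) /\
     oocf_B (a n) (e n) (y (n - 1)%nat) /\
     y n = oocf_T_branch (a n) (e n) (y (n - 1)%nat)) ->
  forall k : nat, (1 <= k)%nat ->
    exists n j : nat,
      (1 <= n)%nat /\ (1 <= j)%nat /\ (Z.of_nat j <= rcf_digit x n)%Z /\
      oocf_conv a e k =
        (IZR (rcfP x (n - 1)) + INR j * IZR (rcfP x n)) /
        (IZR (rcfQ x (n - 1)) + INR j * IZR (rcfQ x n)).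
Proof.
  intros Hx Hi Hy0 Hy k Hk.
  assert (Hdigit : forall n, (1 <= n)%nat -> oocf_digit (a n) (e n)) by apply Hy.
  assert (Hstep : forall n, (1 <= n)%nat ->
    oocf_B (a n) (e n) (y (n - 1)%nat) /\ y n = oocf_T_branch (a n) (e n) (y (n - 1)%nat))
    by apply Hy.
  assert (Hy0i : irrational (y O)) by (rewrite Hy0; exact Hi).
  set (M := oocf_mat a e 1 (k - 1)).
  assert (Hconv : oocf_conv a e k = mobius M 1) by (apply oocf_tail_mobius; auto).
  assert (Hxk : x = mobius M (y k)).
  { pose proof (oocf_orbit_mobius a e Hdigit y Hstep Hy0i 1 (k - 1) (le_n 1)) as Horbit.
    replace (1 + (k - 1))%nat with k in Horbit by lia. rewrite <- Hy0. exact Horbit. }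
  rewrite Hconv. apply (intermediate_convergent_mobius_one x (y k)); try assumption.
  - apply oocf_mat_nonneg_unimodular; auto.
  - apply (oocf_orbit_pos a e Hdigit y Hstep Hy0i).
Qed.
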